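(* Let $A$ be a commutative noetherian local ring and let $x,y\in A$ be a regular exact pair of zero divisors. Let $a\in A$ be weakly regular on the $A$-module $A/(x,y)$, and let $b\in A$ be a non-unit. Then (a) the $A$-modules $G_a$ and $G_{ab}$ are not isomorphic, and (b) the $A$-modules $H_a$ and $H_{ab}$ are not isomorphic.
   Context: Two non-units $x,y\in A$ form an exact pair of zero divisors if $\operatorname{Ann}_A(x)=(y)$ and $\operatorname{Ann}_A(y)=(x)$; such a pair is regular if $(x)\cap(y)=0$. An element $a\in A$ is weakly regular on a module $M$ if multiplication by $a$ on $M$ is injective. For $a\in A$, let $\gamma_a=\begin{pmatrix} x & a\\ 0 & y\end{pmatrix}$ and $\eta_a=\begin{pmatrix} y & -a\\ 0 & x\end{pmatrix}$, viewed as $A$-linear maps $A^2\to A^2$ acting on column vectors, and set $G_a=\operatorname{Coker}\gamma_a$, $H_a=\operatorname{Coker}\eta_a$. *)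

From HB Require Import structures.
From mathcomp Require Import all_boot all_order all_algebra.
Set Implicit Arguments. Unset Strict Implicit. Unset Printing Implicit Defensive.
Import GRing.Theory.
Local Open Scope ring_scope.

Definition is_ideal (A : comUnitRingType) (I : A -> Prop) : Prop :=
  I 0 /\ (forall u v, I u -> I v -> I (u + v)) /\ (forall r u, I u -> I (r * u)).

Definition proper_ideal (A : comUnitRingType) (I : A -> Prop) : Prop :=
  is_ideal I /\ ~ I 1.

Definition maximal_ideal (A : comUnitRingType) (I : A -> Prop) : Prop :=
  proper_ideal I /\
  forall J : A -> Prop, is_ideal J -> (forall u, I u -> J u) ->
    (forall u, J u <-> I u) \/ (forall u, J u).

Definition local_ring (A : comUnitRingType) : Prop :=
  (exists m : A -> Prop, maximal_ideal m) /\
  (forall m1 m2 : A -> Prop, maximal_ideal m1 -> maximal_ideal m2 ->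
     forall u, m1 u <-> m2 u).

Definition noetherian_ring (A : comUnitRingType) : Prop :=
  forall I : nat -> A -> Prop,
    (forall n, is_ideal (I n)) ->
    (forall n u, I n u -> I n.+1 u) ->
    exists n, forall m, (n <= m)%N -> forall u, I m u <-> I n u.

Definition pideal (A : comUnitRingType) (x : A) : A -> Prop :=
  fun z => exists r, z = r * x.
Definition ideal2 (A : comUnitRingType) (x y : A) : A -> Prop :=
  fun z => exists r s, z = r * x + s * y.

Definition ann (A : comUnitRingType) (x : A) : A -> Prop :=
  fun z => z * x = 0.

Definition exact_pair_zd (A : comUnitRingType) (x y : A) : Prop :=
  x \isn't a GRing.unit /\ y \isn't a GRing.unit /\
  (forall z, ann x z <-> pideal y z) /\ (forall z, ann y z <-> pideal x z).

Definition regular_exact_pair (A : comUnitRingType) (x y : A) : Prop :=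
  exact_pair_zd x y /\ (forall z, pideal x z -> pideal y z -> z = 0).

Definition weakly_regular_quot2 (A : comUnitRingType) (a x y : A) : Prop :=
  forall z, ideal2 x y (a * z) -> ideal2 x y z.

(* gamma_a = [[x, a], [0, y]],  eta_a = [[y, -a], [0, x]] *)
Definition upper2 (A : comUnitRingType) (p q r : A) : 'M[A]_2 :=
  \matrix_(i < 2, j < 2)
    (if i == 0 :> nat then (if j == 0 :> nat then p else q)
     else (if j == 0 :> nat then 0 else r)).

Definition gamma (A : comUnitRingType) (x y a : A) : 'M[A]_2 := upper2 x a y.
Definition eta (A : comUnitRingType) (x y a : A) : 'M[A]_2 := upper2 y (- a) x.

Definition in_img (A : comUnitRingType) (M : 'M[A]_2) (v : 'cV[A]_2) : Prop :=
  exists u, v = M *m u.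

(* Coker M = A^2 / Im M, elements represented by vectors of A^2.
   An A-module isomorphism Coker M -> Coker N is a map on classes, given by a
   function on representatives that is well defined, A-linear, injective and
   surjective on classes. *)
Definition coker_iso (A : comUnitRingType) (M N : 'M[A]_2) : Prop :=
  exists f : 'cV[A]_2 -> 'cV[A]_2,
    [/\ (forall v w, in_img M (v - w) -> in_img N (f v - f w)),
        (forall v w, in_img N (f (v + w) - (f v + f w))),
        (forall (r : A) v, in_img N (f (r *: v) - r *: f v)),
        (forall v w, in_img N (f v - f w) -> in_img M (v - w)) &
        (forall w, exists v, in_img N (w - f v))].

From Pilot Require Import Defs.
From mathcomp Require Import all_boot all_order all_algebra.
From mathcomp Require Import ring.
From Stdlib Require Import Classical ClassicalEpsilon.
Set Implicit Arguments. Unset Strict Implicit. Unset Printing Implicit Defensive.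
Import GRing.Theory.
Local Open Scope ring_scope.

(* Let J = (x, y, ab).  Reducing an isomorphism Coker M ~ Coker N modulo J,
   where N = 0 mod J, gives a 2 x 2 matrix F that is right invertible modulo J
   and kills the columns of M modulo J; since det F is then a unit modulo J,
   M = 0 mod J.  For (M, N) = (gamma_a, gamma_ab) or (eta_a, eta_ab) this puts
   a in J.  But a = r x + s y + t a b forces a (1 - t b) into (x, y), so by weak
   regularity the unit 1 - t b lies in (x, y), inside the maximal ideal. *)

Lemma mulmx2E (R : pzSemiRingType) m p (M : 'M[R]_(m, 2)) (N : 'M[R]_(2, p)) i j :
  (M *m N) i j = M i 0 * N 0 j + M i 1 * N 1 j.
Proof.
rewrite mxE !big_ord_recl big_ord0 addr0.
by have -> : lift ord0 ord0 = 1 :> 'I_2 by apply: val_inj.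
Qed.

Lemma mxBE (V : zmodType) m n (M N : 'M[V]_(m, n)) i j :
  (M - N) i j = M i j - N i j.
Proof. by rewrite !mxE. Qed.

Section IdealMatrices.
Variables (A : comUnitRingType) (J : A -> Prop).
Hypothesis idJ : is_ideal J.

Lemma ideal0 : J 0. Proof. by case: idJ. Qed.
Lemma idealD u v : J u -> J v -> J (u + v). Proof. by case: idJ => _ [+ _]; apply. Qed.
Lemma idealMl r u : J u -> J (r * u). Proof. by case: idJ => _ [_]; apply. Qed.
Lemma idealMr r u : J u -> J (u * r). Proof. by rewrite mulrC; apply: idealMl. Qed.
Lemma idealN u : J u -> J (- u). Proof. by rewrite -mulN1r; apply: idealMl. Qed.
Lemma idealB u v : J u -> J v -> J (u - v).
Proof. by move=> Ju Jv; apply: idealD => //; apply: idealN. Qed.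

Definition ideal_mx m n (M : 'M[A]_(m, n)) := forall i j, J (M i j).

Lemma ideal_mx_mulr m n p (M : 'M[A]_(m, n)) (N : 'M[A]_(n, p)) :
  ideal_mx M -> ideal_mx (M *m N).
Proof.
move=> JM i j; rewrite mxE; apply: (big_ind J ideal0 idealD) => k _.
exact: idealMr.
Qed.

Lemma ideal_mx_mull m n p (M : 'M[A]_(m, n)) (N : 'M[A]_(n, p)) :
  ideal_mx N -> ideal_mx (M *m N).
Proof.
move=> JN i j; rewrite mxE; apply: (big_ind J ideal0 idealD) => k _.
exact: idealMl.
Qed.

Lemma ideal_mx_upper2 (p q r : A) : J p -> J q -> J r -> ideal_mx (upper2 p q r).
Proof.
by move=> Jp Jq Jr [[|[|?]] ?] [[|[|?]] ?]; rewrite mxE //=; apply: ideal0.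
Qed.

Lemma det_mx22 (M : 'M[A]_2) : \det M = M 0 0 * M 1 1 - M 0 1 * M 1 0.
Proof.
rewrite (expand_det_row _ 0) !big_ord_recl big_ord0 /cofactor !det_mx11 !mxE /=.
have -> : lift 0 (0 : 'I_1) = 1 by apply: val_inj.
have -> : lift 1 (0 : 'I_1) = 0 by apply: val_inj.
by rewrite /bump /=; ring.
Qed.

(* Modulo J, a right invertible 2 x 2 matrix has trivial kernel: its
   determinant is invertible modulo J, and the adjugate does the rest. *)
Lemma ideal_mx_ker_rinv (F W : 'M[A]_2) (v : 'cV[A]_2) :
  ideal_mx (F *m W - 1) -> ideal_mx (F *m v) -> ideal_mx v.
Proof.
move=> JFW JFv i j.
have Jdet : J (1 - \det F * \det W).
  rewrite -det_mulmx det_mx22.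
  move: (JFW 0 0) (JFW 0 1) (JFW 1 0) (JFW 1 1).
  rewrite !mxE /= => J00 J01 J10 J11.
  have det_shift (c00 c01 c10 c11 : A) : 1 - (c00 * c11 - c01 * c10) =
    - ((c00 - 1) * (c11 - 1) + (c00 - 1) + (c11 - 1)) + (c01 - 0) * (c10 - 0).
    by ring.
  rewrite det_shift.
  apply: idealD; last exact: idealMr.
  by apply: idealN; apply: idealD; [apply: idealD => //; apply: idealMr|].
have JdetF : ideal_mx (\det F *: v).
  by rewrite -mul_scalar_mx -mul_adj_mx -mulmxA; apply: ideal_mx_mull.
have -> : v i j = \det W * (\det F *: v) i j + (1 - \det F * \det W) * v i j.
  by rewrite mxE; ring.
by apply: idealD; [apply: idealMl | apply: idealMr].
Qed.

End IdealMatrices.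

Section CokernelIso.
Variables (A : comUnitRingType) (J : A -> Prop).
Hypothesis idJ : is_ideal J.
Variables (M N : 'M[A]_2) (f : 'cV[A]_2 -> 'cV[A]_2).
Hypothesis JN : ideal_mx J N.
Hypotheses (f_wd : forall v w, in_img M (v - w) -> in_img N (f v - f w))
  (f_add : forall v w, in_img N (f (v + w) - (f v + f w)))
  (f_scale : forall (r : A) v, in_img N (f (r *: v) - r *: f v))
  (f_surj : forall w, exists v, in_img N (w - f v)).

Let ideal_img v : in_img N v -> ideal_mx J v.
Proof. by move=> [u ->]; apply: ideal_mx_mulr. Qed.

Definition coker_mx : 'M[A]_2 := \matrix_(i, j) f (delta_mx j 0) i 0.

Lemma coker_mx_mulE v : ideal_mx J (f v - coker_mx *m v).
Proof.
have v_dec : v = v 0 0 *: delta_mx 0 0 + v 1 0 *: delta_mx 1 0.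
  by apply/matrixP => -[[|[|?]] ?] j; rewrite !mxE ?ord1 //=;
    rewrite ?mulr1 ?mulr0 ?addr0 ?add0r; congr (v _ _); apply: val_inj.
move=> i j; rewrite ord1 mxBE mulmx2E !mxE.
move: (ideal_img (f_add (v 0 0 *: delta_mx 0 0) (v 1 0 *: delta_mx 1 0)) i 0)
  (ideal_img (f_scale (v 0 0) (delta_mx 0 0)) i 0)
  (ideal_img (f_scale (v 1 0) (delta_mx 1 0)) i 0).
rewrite !mxE -v_dec.
set x := f (_ *: delta_mx 0 0) i 0; set y := f (_ *: delta_mx 1 0) i 0.
move=> Jadd Jx Jy.
have -> : f v i 0 - (f (delta_mx 0 0) i 0 * v 0 0 + f (delta_mx 1 0) i 0 * v 1 0)
  = (f v i 0 - (x + y)) + (x - v 0 0 * f (delta_mx 0 0) i 0)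
    + (y - v 1 0 * f (delta_mx 1 0) i 0) by ring.
by apply: (idealD idJ (idealD idJ Jadd Jx) Jy).
Qed.

Lemma coker_map0 : ideal_mx J (f 0).
Proof.
by move: (ideal_img (f_scale 0 0)); rewrite !scale0r subr0.
Qed.

Lemma coker_mx_mul_img (u : 'cV[A]_2) : ideal_mx J (coker_mx *m (M *m u)).
Proof.
have imgMu : in_img M (M *m u - 0) by exists u; rewrite subr0.
have Jwd := ideal_img (f_wd imgMu).
move=> i j; move: (Jwd i j) (coker_map0 i j) (coker_mx_mulE (M *m u) i j).
rewrite !mxBE; set Fv := (coker_mx *m _) i j => J1 J2 J3.
have -> : Fv = (f (M *m u) i j - f 0 i j) + f 0 i j - (f (M *m u) i j - Fv) by ring.
exact: (idealB idJ (idealD idJ J1 J2) J3).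
Qed.

Lemma coker_mx_rinv : exists W, ideal_mx J (coker_mx *m W - 1).
Proof.
have [w Hw] := fin_all_exists (fun j : 'I_2 => f_surj (delta_mx j 0)).
exists (\matrix_(i, j) w j i 0) => i j.
have -> : (coker_mx *m \matrix_(i, j) w j i 0 - 1) i j
        = - ((delta_mx j 0 - f (w j)) i 0 + (f (w j) - coker_mx *m w j) i 0).
  rewrite !mxBE !mulmx2E !mxE eq_sym andbT; ring.
exact/(idealN idJ)/(idealD idJ (ideal_img (Hw j) i 0) (coker_mx_mulE (w j) i 0)).
Qed.

End CokernelIso.

Lemma coker_iso_upper2_ideal (A : comUnitRingType) (J : A -> Prop) (p q r : A)
    (N : 'M[A]_2) :
  is_ideal J -> ideal_mx J N -> coker_iso (upper2 p q r) N -> J q.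
Proof.
move=> idJ JN [f [f_wd f_add f_scale _ f_surj]].
have [W JW] := coker_mx_rinv idJ JN f_add f_scale f_surj.
have := ideal_mx_ker_rinv idJ JW
  (coker_mx_mul_img idJ JN f_wd f_add f_scale (delta_mx 1 0)).
by move/(_ 0 0); rewrite mulmx2E !mxE /= mulr0 mulr1 add0r.
Qed.

Section MaximalIdeals.
Variable A : comUnitRingType.

(* Unqualified, [proper_ideal] would resolve to MathComp's ring_quotient one. *)

Lemma pideal_is_ideal (z : A) : is_ideal (pideal z).
Proof.
split; first by exists 0; rewrite mul0r.
split; first by move=> _ _ [r ->] [s ->]; exists (r + s); rewrite mulrDl.
by move=> r _ [s ->]; exists (r * s); rewrite mulrA.
Qed.

Lemma not_maximal_strict_sup (K : A -> Prop) :
  Defs.proper_ideal K -> ~ maximal_ideal K ->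
  exists K', [/\ Defs.proper_ideal K', forall u, K u -> K' u
              & ~ (forall u, K' u <-> K u)].
Proof.
move=> pK notmaxK; apply: NNPP => noK'; apply: notmaxK; split=> // K' idK' KK'.
apply: NNPP => /not_or_and [notKK' notall]; apply: noK'; exists K'; split=> //.
split=> // K'1; apply: notall => u.
by rewrite -(mulr1 u); case: idK' => _ [_]; apply.
Qed.

Lemma noetherian_maximal_ideal_sup (I : A -> Prop) :
  noetherian_ring A -> Defs.proper_ideal I ->
  exists2 m, maximal_ideal m & forall u, I u -> m u.
Proof.
move=> noethA pI; apply: NNPP => nomax.
pose above K := Defs.proper_ideal K /\ forall u, I u -> K u.
pose strict_sup K K' := [/\ above K', forall u, K u -> K' u
                          & ~ (forall u, K' u <-> K u)].
have step K : above K -> exists K', strict_sup K K'.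
  move=> [pK IK]; have [|K' [pK' KK' neK']] := not_maximal_strict_sup pK.
    by move=> maxK; apply: nomax; exists K.
  by exists K'; split=> //; split=> // u /IK /KK'.
pose next K := epsilon (inhabits K) (strict_sup K).
pose chain n := iter n next I.
have chain_sup n : above (chain n) /\ strict_sup (chain n) (chain n.+1).
  elim: n => [|n [_ [IH _ _]]]; last by split=> //; exact: epsilon_spec (step _ IH).
  by have aboveI : above I by []; split=> //; exact: epsilon_spec (step _ aboveI).
have [n stable] : exists n, forall k, (n <= k)%N -> forall u, chain k u <-> chain n u.
  apply: noethA => [k | k u].
    by have [[[]]] := chain_sup k.
  by have [_ [_ sub _]] := chain_sup k; apply: sub.
by have [_ [_ _ neq]] := chain_sup n; apply: neq; apply: stable; exact: leqnSn.
Qed.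

Lemma local_nonunit_maximal (m : A -> Prop) (z : A) :
  noetherian_ring A -> local_ring A -> maximal_ideal m ->
  z \isn't a GRing.unit -> m z.
Proof.
move=> noethA [_ uniq_max] maxm nuz.
have pz : Defs.proper_ideal (pideal z).
  split; first exact: pideal_is_ideal.
  move=> [r r1]; move/negP: nuz; apply; apply/unitrP.
  by exists r; rewrite [z * r]mulrC -r1.
have [m' maxm' zm'] := noetherian_maximal_ideal_sup noethA pz.
by apply/(uniq_max _ _ maxm' maxm)/zm'; exists 1; rewrite mul1r.
Qed.

Definition ideal3 (x y z : A) : A -> Prop :=
  fun w => exists r s t, w = r * x + s * y + t * z.

Lemma ideal3_is_ideal (x y z : A) : is_ideal (ideal3 x y z).
Proof.
split; first by exists 0, 0, 0; rewrite !mul0r !addr0.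
split=> [_ _ [r [s [t ->]]] [r' [s' [t' ->]]] | c _ [r [s [t ->]]]].
  by exists (r + r'), (s + s'), (t + t'); ring.
by exists (c * r), (c * s), (c * t); ring.
Qed.

Lemma weakly_regular_notin_ideal3 (m : A -> Prop) (x y a b : A) :
  Defs.proper_ideal m -> m x -> m y -> m b ->
  weakly_regular_quot2 a x y -> ~ ideal3 x y (a * b) a.
Proof.
move=> [[_ [mD mM]] m1] mx my mb wra [r [s [t Ea]]].
have [r' [s' E1]] : ideal2 x y (1 - t * b).
  apply: wra; exists r, s.
  by rewrite mulrBr mulr1 {1}Ea; ring.
apply: m1; rewrite -(subrK (t * b) 1) E1.
by apply: (mD); [apply: (mD); apply: (mM) | apply: (mM)].
Qed.

End MaximalIdeals.

Unset Implicit Arguments.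

Theorem theorem5p2 (A : comUnitRingType) (x y a b : A) :
  noetherian_ring A -> local_ring A ->
  regular_exact_pair x y ->
  weakly_regular_quot2 a x y ->
  b \isn't a GRing.unit ->
  ~ coker_iso (gamma x y a) (gamma x y (a * b)) /\
  ~ coker_iso (eta x y a) (eta x y (a * b)).
Proof.
move=> noethA localA [[nux [nuy _]] _] wra nub.
have [[m maxm] _] := localA.
have inm z : z \isn't a GRing.unit -> m z.
  exact: local_nonunit_maximal noethA localA maxm.
have a_notin := weakly_regular_notin_ideal3 maxm.1 (inm _ nux) (inm _ nuy)
  (inm _ nub) wra.
have idJ := ideal3_is_ideal x y (a * b).
have Jx : ideal3 x y (a * b) x by exists 1, 0, 0; ring.
have Jy : ideal3 x y (a * b) y by exists 0, 1, 0; ring.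
have Jab : ideal3 x y (a * b) (a * b) by exists 0, 0, 1; ring.
split=> [iso_gamma | iso_eta].
  exact: a_notin
    (coker_iso_upper2_ideal idJ (ideal_mx_upper2 idJ Jx Jab Jy) iso_gamma).
have JNab := idealN idJ Jab.
have := coker_iso_upper2_ideal idJ (ideal_mx_upper2 idJ Jy JNab Jx) iso_eta.
by move/(idealN idJ); rewrite opprK.
Qed.
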